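(* Let $A,B\in\mathbb{C}^{n\times n}$ with $A$ diagonalizable and $\operatorname{rank}(B)=1$, and let $C=A+B$. If $C$ is diagonalizable, then $|\Lambda(C)|\leq 2|\Lambda(A)|$. If $C$ is not diagonalizable, then $|\Lambda(C)|\leq 2|\Lambda(A)|-1$.
   Context: For $M\in\mathbb{C}^{n\times n}$, $\Lambda(M)$ denotes the set of distinct eigenvalues of $M$ and $|\cdot|$ the cardinality of a set. *)

From HB Require Import structures.
From mathcomp Require Import all_boot all_order all_algebra.
From mathcomp Require Import finmap classical_sets cardinality.
From mathcomp Require Import complex.
From mathcomp Require Import reals.
Set Implicit Arguments. Unset Strict Implicit. Unset Printing Implicit Defensive.
Import GRing.Theory Num.Theory.
Local Open Scope ring_scope.

Definition spectrum (F : fieldType) (n : nat) (M : 'M[F]_n) : set F :=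
  [set a | eigenvalue M a].

(* |Λ(M)|: the number of distinct eigenvalues (the spectrum is finite). *)
Definition nb_eig (F : fieldType) (n : nat) (M : 'M[F]_n) : nat :=
  (#|` fset_set (spectrum M)|)%fset.

From HB Require Import structures.
From mathcomp Require Import all_boot all_order all_algebra.
From mathcomp Require Import finmap boolp classical_sets cardinality.
From mathcomp Require Import complex.
From mathcomp Require Import reals.
From mathcomp Require Import zify.
Set Implicit Arguments. Unset Strict Implicit. Unset Printing Implicit Defensive.
Import GRing.Theory Num.Theory.
Local Open Scope ring_scope.

(** Let k = |Λ(A)|, r = rank B and C = A + B. The geometric multiplicities of
   the diagonalizable A add up to n, and at each eigenvalue of A the
   multiplicity drops by at most r when passing to C (the eigenspace of A meets
   ker B in a subspace of the eigenspace of C).  Hence the eigenspaces of C at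
   the eigenvalues of A already have total dimension at least n - r k; since the
   eigenspaces of C form a direct sum inside F^n, at most r k eigenvalues of C
   lie outside Λ(A), and strictly fewer than r k if C is not diagonalizable.
   Thus |Λ(C)| <= (r + 1) k, strictly if C is not diagonalizable; r = 1 gives
   the theorem. *)

Section GeometricMultiplicity.
Variables (F : fieldType) (n : nat).
Implicit Types (M B : 'M[F]_n) (s : seq F).

Definition geo_mult M a : nat := \rank (eigenspace M a).

Lemma geo_mult_gt0 M a : (0 < geo_mult M a)%N = eigenvalue M a.
Proof. by rewrite lt0n mxrank_eq0. Qed.

Lemma mxrank_sum_eigenspace M s : uniq s ->
  \rank (\sum_(a <- s) eigenspace M a)%MS = (\sum_(a <- s) geo_mult M a)%N.
Proof.
move=> s_uniq; rewrite (big_nth 0) big_mkord [RHS](big_nth 0) big_mkord.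
have dx : mxdirect (\sum_(i < size s) eigenspace M s`_i).
  apply: mxdirect_sum_eigenspace => i j _ _ sij; apply/val_inj.
  by apply/eqP; rewrite -(nth_uniq 0 _ _ s_uniq) ?ltn_ord // sij.
by rewrite (mxdirectP dx).
Qed.

Lemma sum_geo_mult_le M s : uniq s -> (\sum_(a <- s) geo_mult M a <= n)%N.
Proof. by move=> s_uniq; rewrite -mxrank_sum_eigenspace // rank_leq_col. Qed.

Lemma sum_geo_mult_diagonalizable M s : uniq s ->
  (\sum_(a <- s) geo_mult M a)%N = n -> diagonalizable M.
Proof.
move=> s_uniq sum_n; apply/diagonalizablePeigen; exists s => //.
apply/eqmxP; rewrite submx1 sub1mx /row_full.
by rewrite mxrank_sum_eigenspace // sum_n eqxx.
Qed.

Lemma mxrank_eigenspace_addr_le M B a :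
  (geo_mult M a <= geo_mult (M + B) a + \rank B)%N.
Proof.
have sub : (eigenspace M a :&: kermx B <= eigenspace (M + B) a)%MS.
  apply/eigenspaceP; rewrite mulmxDr.
  have /eigenspaceP -> := capmxSl (eigenspace M a) (kermx B).
  have := capmxSr (eigenspace M a) (kermx B).
  by rewrite sub_kermx => /eqP ->; rewrite addr0.
have [le_cap _] := mxrank_leqif_sup sub.
have sum_cap := mxrank_sum_cap (eigenspace M a) (kermx B).
have le_sum := rank_leq_col (eigenspace M a + kermx B)%MS.
have le_B := rank_leq_row B.
rewrite mxrank_ker in sum_cap; rewrite /geo_mult; lia.
Qed.

Lemma finite_spectrum M : finite_set (spectrum M).
Proof.
apply: contrapT => /(infinite_set_fset n.+1) [X X_spec X_big].
have := sum_geo_mult_le M (fset_uniq X); apply/negP; rewrite -ltnNge.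
apply: leq_trans X_big _; rewrite -[leqLHS]sum1_size big_seq [leqRHS]big_seq.
by apply: leq_sum => a /X_spec; rewrite geo_mult_gt0.
Qed.

Definition eigenvalues M : seq F := fset_set (spectrum M).

Lemma eigenvalues_uniq M : uniq (eigenvalues M).
Proof. exact: fset_uniq. Qed.

Lemma mem_eigenvalues M : eigenvalues M =i eigenvalue M.
Proof.
move=> a; rewrite /eigenvalues in_fset_set; last exact: finite_spectrum.
by apply/idP/idP; rewrite inE.
Qed.

Lemma size_eigenvalues M : size (eigenvalues M) = nb_eig M.
Proof. by []. Qed.

Lemma diagonalizable_sum_geo_mult M :
  diagonalizable M <-> (\sum_(a <- eigenvalues M) geo_mult M a)%N = n.
Proof.
split; last exact/sum_geo_mult_diagonalizable/eigenvalues_uniq.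
move=> /diagonalizablePeigen [s s_uniq s_full].
apply/eqP; rewrite eqn_leq sum_geo_mult_le ?eigenvalues_uniq //=.
have <- : (\sum_(a <- s | eigenvalue M a) geo_mult M a)%N = n.
  rewrite -[RHS](mxrank1 F n) -s_full mxrank_sum_eigenspace // big_mkcond.
  apply: eq_bigr => a _.
  by rewrite /geo_mult; case: ifPn => // /negPn /eqP ->; rewrite mxrank0.
rewrite -big_filter.
apply: (@uniq_sub_le_big _ addn leq leqnn (fun x y => leq_addr y x)).
- by rewrite filter_uniq.
- exact: eigenvalues_uniq.
- by move=> a; rewrite mem_filter mem_eigenvalues => /andP [].
Qed.

End GeometricMultiplicity.

Section RankPerturbation.
Variables (F : fieldType) (n : nat) (A B : 'M[F]_n).
Hypothesis A_diag : diagonalizable A.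

Let C := A + B.
Let new_eigs := [seq a <- eigenvalues C | a \notin eigenvalues A].

Lemma leq_sum_geo_mult_addr :
  (n <= \sum_(a <- eigenvalues A) geo_mult C a + \rank B * nb_eig A)%N.
Proof.
rewrite -{1}(proj1 (diagonalizable_sum_geo_mult A) A_diag) -size_eigenvalues.
rewrite -sum1_size big_distrr -big_split /=.
by apply: leq_sum => a _; rewrite muln1 mxrank_eigenspace_addr_le.
Qed.

Lemma size_new_eigs_le : (size new_eigs <= \sum_(a <- new_eigs) geo_mult C a)%N.
Proof.
rewrite -sum1_size big_seq [leqRHS]big_seq; apply: leq_sum => a.
rewrite /new_eigs mem_filter => /andP [_].
by rewrite mem_eigenvalues geo_mult_gt0.
Qed.

Lemma nb_eig_le_new_eigs : (nb_eig C <= nb_eig A + size new_eigs)%N.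
Proof.
rewrite -!size_eigenvalues size_filter -(count_predC (mem (eigenvalues A))).
rewrite leq_add2r -size_filter uniq_leq_size ?filter_uniq ?eigenvalues_uniq //.
by move=> a; rewrite mem_filter => /andP [].
Qed.

Lemma eigenvalues_cat_new_uniq : uniq (eigenvalues A ++ new_eigs).
Proof.
rewrite cat_uniq !filter_uniq ?eigenvalues_uniq // andbT /=.
by apply/hasPn => a; rewrite mem_filter => /andP [].
Qed.

Theorem nb_eig_addr_le :
  (nb_eig C <= (\rank B).+1 * nb_eig A)%N /\
  (~ diagonalizable C -> (nb_eig C < (\rank B).+1 * nb_eig A)%N).
Proof.
have sum_cat : (\sum_(a <- eigenvalues A ++ new_eigs) geo_mult C a =
    \sum_(a <- eigenvalues A) geo_mult C a +
    \sum_(a <- new_eigs) geo_mult C a)%N.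
  exact: big_cat.
have sum_le := sum_geo_mult_le C eigenvalues_cat_new_uniq.
have sum_lt : ~ diagonalizable C -> (\sum_(a <- eigenvalues A) geo_mult C a +
    \sum_(a <- new_eigs) geo_mult C a < n)%N.
  move=> C_nondiag; rewrite ltn_neqAle -sum_cat sum_le andbT.
  apply/eqP => /(sum_geo_mult_diagonalizable eigenvalues_cat_new_uniq).
  exact: C_nondiag.
rewrite sum_cat in sum_le.
have := leq_sum_geo_mult_addr; have := size_new_eigs_le.
have := nb_eig_le_new_eigs.
rewrite mulSn; split=> [|/sum_lt]; lia.
Qed.

End RankPerturbation.

Theorem corollary4p2 (R : realType) (n : nat) (A B : 'M[R[i]]_n) :
  diagonalizable A -> \rank B = 1%N ->
  (diagonalizable (A + B) -> (nb_eig (A + B) <= 2 * nb_eig A)%N) /\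
  (~ diagonalizable (A + B) -> (nb_eig (A + B) <= 2 * nb_eig A - 1)%N).
Proof.
move=> A_diag rank_B; have [le_C lt_C] := nb_eig_addr_le B A_diag.
rewrite rank_B in le_C lt_C; split=> [_|/lt_C]; first exact: le_C.
by move=> /(leq_sub2r 1); rewrite subn1.
Qed.
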